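(* Let $G$ be a graph with a length-function $\ell$. The set of cycles of $G$ that are fully geodesic in $G$ generates the cycle space of $G$ (over $\mathbb{F}_2$).
   Context: All graphs are finite; parallel edges are allowed, loops are not; a cycle may consist of two vertices joined by two parallel edges. A length-function on a graph $G$ is a map $\ell:E(G)\to\mathbb{R}^+$ (strictly positive reals); $\ell(H)=\sum_{e\in E(H)}\ell(e)$ for subgraphs $H$, which carry the restricted length-function. $\mathrm{sd}_G(A)$ is the minimum of $\ell(S)$ over connected subgraphs $S\subseteq G$ with $A\subseteq V(S)$ ($\infty$ if none). $H\subseteq G$ is $k$-geodesic in $G$ if $\mathrm{sd}_H(A)=\mathrm{sd}_G(A)$ for all $A\subseteq V(H)$ with $|A|\le k$, and fully geodesic if it is $k$-geodesic for every $k\in\mathbb{N}$. The cycle space of $G$ is the $\mathbb{F}_2$-vector space of edge sets of $G$ in which every vertex has even degree, with symmetric difference as addition. *)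

From HB Require Import structures.
From mathcomp Require Import all_boot all_order all_algebra.
Set Implicit Arguments. Unset Strict Implicit. Unset Printing Implicit Defensive.
Import Order.TTheory GRing.Theory Num.Theory.

(* A finite multigraph (parallel edges allowed) is given by a finite vertex
   type V, a finite edge type E and endpoint maps src tgt : E -> V; loops are
   excluded by the hypothesis [forall e, src e != tgt e] in the theorem.
   Edges are undirected: src/tgt merely name the two ends. *)

Section Graphs.
Variables (V E : finType) (src tgt : E -> V).

Definition incident (e : E) (v : V) : bool := (src e == v) || (tgt e == v).

Definition is_subgraph (VS : {set V}) (ES : {set E}) : bool :=
  [forall e in ES, (src e \in VS) && (tgt e \in VS)].

Definition adj (ES : {set E}) : rel V :=
  fun u v => [exists e in ES,
    ((src e == u) && (tgt e == v)) || ((src e == v) && (tgt e == u))].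

Definition connected_sub (VS : {set V}) (ES : {set E}) : bool :=
  (VS != set0) && [forall u in VS, forall v in VS, connect (adj ES) u v].

(* degree of v in the edge set ES (no loops, so each incident edge counts once) *)
Definition deg (ES : {set E}) (v : V) : nat := #|[set e in ES | incident e v]|.

(* a cycle: connected, every vertex has degree 2
   (with no loops this is exactly a cycle; two parallel edges form a cycle) *)
Definition is_cycle (VS : {set V}) (ES : {set E}) : bool :=
  [&& is_subgraph VS ES, connected_sub VS ES & [forall v in VS, deg ES v == 2]].

Definition in_cycle_space (F : {set E}) : bool := [forall v, ~~ odd (deg F v)].

Definition symdiff (A B : {set E}) : {set E} := (A :\: B) :|: (B :\: A).

Definition F2sum (s : seq {set E}) : {set E} := foldr symdiff set0 s.

Variable (R : realFieldType) (len : E -> R).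

Definition glen (ES : {set E}) : R := (\sum_(e in ES) len e)%R.

Definition omin (x y : option R) : option R :=
  match x, y with
  | Some a, Some b => Some (Order.min a b)
  | None, _ => y
  | _, None => x
  end.

(* sd_H(A) for H = (VS, ES): minimum length of a connected subgraph S of H
   with A included in V(S); None stands for infinity. *)
Definition sd (VS : {set V}) (ES : {set E}) (A : {set V}) : option R :=
  foldr omin None
    [seq Some (glen X.2) | X <- enum [set X : {set V} * {set E} |
        [&& X.1 \subset VS, X.2 \subset ES, is_subgraph X.1 X.2,
            connected_sub X.1 X.2 & A \subset X.1]]].

Definition k_geodesic (k : nat) (VS : {set V}) (ES : {set E}) : Prop :=
  forall A : {set V}, A \subset VS -> #|A| <= k ->
    sd VS ES A = sd [set: V] [set: E] A.

Definition fully_geodesic (VS : {set V}) (ES : {set E}) : Prop :=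
  forall k, k_geodesic k VS ES.

End Graphs.

From HB Require Import structures.
From mathcomp Require Import all_boot all_order all_algebra.
From mathcomp Require Import zify.
From Stdlib Require Import Classical.
Import Order.TTheory GRing.Theory Num.Theory.
Set Implicit Arguments. Unset Strict Implicit. Unset Printing Implicit Defensive.

(* Induction on the length of F. A nonempty F in the cycle space contains a
   cycle C; if C <> F, then F = C + (F \ C) with both summands in the cycle
   space and shorter than F. If C = F is not fully geodesic, some set A of
   vertices of C lies in a connected subgraph S of G that is shorter than every
   connected subgraph of C containing A. Fix a root r in A and r-x paths R_x in
   S. For consecutive vertices a, a' of A along C, joined by the arc P of C, the
   edge set P + R_a + R_a' lies in the cycle space and is shorter than C: the
   rest of C is a connected subgraph of C containing A, hence longer than S.
   Going once around C, these edge sets sum to C. *)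

Section SymmetricDifference.
Variable E : finType.
Implicit Types A B C : {set E}.

Lemma in_symdiff A B x : (x \in symdiff A B) = (x \in A) (+) (x \in B).
Proof. by rewrite /symdiff !inE; case: (x \in A); case: (x \in B). Qed.

Lemma symdiffA A B C : symdiff A (symdiff B C) = symdiff (symdiff A B) C.
Proof. by apply/setP=> x; rewrite !in_symdiff addbA. Qed.

Lemma symdiffC A B : symdiff A B = symdiff B A.
Proof. by apply/setP=> x; rewrite !in_symdiff addbC. Qed.

Lemma symdiffs0 A : symdiff A set0 = A.
Proof. by apply/setP=> x; rewrite in_symdiff inE addbF. Qed.

Lemma symdiffv A : symdiff A A = set0.
Proof. by apply/setP=> x; rewrite in_symdiff inE addbb. Qed.

Lemma symdiff_sub A B : A \subset B -> symdiff B A = B :\: A.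
Proof.
move=> sAB; apply/setP=> x; rewrite in_symdiff !inE.
by case xA: (x \in A); rewrite ?(subsetP sAB _ xA) ?addbF.
Qed.

Lemma symdiff_disjoint A B : [disjoint A & B] -> symdiff A B = A :|: B.
Proof.
move=> /pred0P AB; apply/setP=> x; rewrite in_symdiff inE.
by have := AB x; rewrite /=; case: (x \in A); case: (x \in B).
Qed.

Lemma F2sum_cat (s1 s2 : seq {set E}) :
  F2sum (s1 ++ s2) = symdiff (F2sum s1) (F2sum s2).
Proof.
elim: s1 => [|A s IH] /=; first by rewrite symdiffC symdiffs0.
by rewrite IH symdiffA.
Qed.

Lemma odd_card_symdiff A B : odd #|symdiff A B| = odd #|A| (+) odd #|B|.
Proof.
have disjD : (A :\: B) :&: (B :\: A) = set0.
  by apply/setP=> x; rewrite !inE; case: (x \in A); case: (x \in B).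
rewrite /symdiff cardsU disjD cards0 subn0 -(cardsID B A) -(cardsID A B) setIC.
by rewrite !oddD; case: (odd _); case: (odd _); case: (odd _).
Qed.

End SymmetricDifference.

Section EdgeSets.
Variables (V E : finType) (src tgt : E -> V).
Hypothesis noloop : forall e, src e != tgt e.

Definition odd_deg (F : {set E}) (v : V) : bool := odd (deg src tgt F v).

Definition joins (e : E) (x y : V) : bool :=
  (src e == x) && (tgt e == y) || (src e == y) && (tgt e == x).

Lemma odd_deg_symdiff A B v :
  odd_deg (symdiff A B) v = odd_deg A v (+) odd_deg B v.
Proof.
rewrite /odd_deg /deg -odd_card_symdiff.
have -> : [set e in symdiff A B | incident src tgt e v] =
    symdiff [set e in A | incident src tgt e v] [set e in B | incident src tgt e v] => //.
by apply/setP=> x; rewrite !inE; case: (x \in A); case: (x \in B); case: incident.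
Qed.

Lemma odd_deg0 v : odd_deg set0 v = false.
Proof.
by rewrite /odd_deg /deg (_ : [set _ in _ | _] = set0) ?cards0 //; apply/setP=> x; rewrite !inE.
Qed.

Lemma odd_deg1 e v : odd_deg [set e] v = incident src tgt e v.
Proof.
rewrite /odd_deg /deg; case ev: (incident src tgt e v).
  rewrite (_ : [set _ in _ | _] = [set e]) ?cards1 //.
  by apply/setP=> x; rewrite !inE; case: eqP => // ->; rewrite ev.
rewrite (_ : [set _ in _ | _] = set0) ?cards0 //.
by apply/setP=> x; rewrite !inE; case: eqP => // ->; rewrite ev.
Qed.

Lemma incidentE e v : incident src tgt e v = (src e == v) (+) (tgt e == v).
Proof.
rewrite /incident; have := noloop e.
by case: (eqVneq (src e) v) => [<-|_]; case: (eqVneq (tgt e) (src e)).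
Qed.

Lemma joins_incident e x y v :
  joins e x y -> incident src tgt e v = (x == v) (+) (y == v).
Proof.
by rewrite incidentE /joins => /orP[]/andP[/eqP-> /eqP->] //; rewrite addbC.
Qed.

Lemma joins_ends e x y x' y' : joins e x y -> joins e x' y' ->
  (x = x' /\ y = y') \/ (x = y' /\ y = x').
Proof. by rewrite /joins => /orP[]/andP[/eqP<- /eqP<-] /orP[]/andP[/eqP<- /eqP<-]; auto. Qed.

Lemma adj_joins (X : {set E}) u v : adj src tgt X u v = [exists e in X, joins e u v].
Proof. by []. Qed.

Lemma adj_sym (X : {set E}) : symmetric (adj src tgt X).
Proof.
by move=> u v; apply/existsP/existsP => -[e He]; exists e; rewrite /joins orbC.
Qed.

Lemma cycle_spaceP (F : {set E}) :
  reflect (forall v, ~~ odd_deg F v) (in_cycle_space src tgt F).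
Proof. exact: forallP. Qed.

Lemma connected_sub_connect (VS : {set V}) (ES : {set E}) u v :
  connected_sub src tgt VS ES -> u \in VS -> v \in VS -> connect (adj src tgt ES) u v.
Proof.
rewrite /connected_sub => /andP[_ /forallP conn] uV vV.
by move/implyP: (conn u) => /(_ uV)/forallP/(_ v)/implyP; apply.
Qed.

Lemma subgraph_vertex v : is_subgraph src tgt [set v] set0.
Proof. by apply/forallP => e; rewrite in_set0. Qed.

Lemma connected_vertex v : connected_sub src tgt [set v] set0.
Proof.
apply/andP; split; first by apply/set0Pn; exists v; rewrite inE.
by apply/forallP => x; apply/implyP => /set1P->; apply/forallP => y; apply/implyP => /set1P->.
Qed.

Lemma cycle_space0 : in_cycle_space src tgt set0.
Proof. by apply/cycle_spaceP=> v; rewrite odd_deg0. Qed.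

Lemma cycle_space_symdiff A B : in_cycle_space src tgt A ->
  in_cycle_space src tgt B -> in_cycle_space src tgt (symdiff A B).
Proof.
move=> /cycle_spaceP evA /cycle_spaceP evB; apply/cycle_spaceP=> v.
by rewrite odd_deg_symdiff (negbTE (evA v)) (negbTE (evB v)).
Qed.

Lemma cycle_space_F2sum (s : seq {set E}) :
  {in s, forall A, in_cycle_space src tgt A} -> in_cycle_space src tgt (F2sum s).
Proof.
elim: s => [|A s IH] evs /=; first exact: cycle_space0.
apply: cycle_space_symdiff; first by apply: evs; rewrite mem_head.
by apply: IH => B sB; apply: evs; rewrite inE sB orbT.
Qed.

Lemma cycle_in_cycle_space (VS : {set V}) (ES : {set E}) :
  is_cycle src tgt VS ES -> in_cycle_space src tgt ES.
Proof.
case/and3P => /forallP sub _ /forallP deg2; apply/forallP => v.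
have [vV|vV] := boolP (v \in VS); first by move/implyP: (deg2 v) => /(_ vV)/eqP->.
rewrite /deg (_ : [set _ in _ | _] = set0) ?cards0 //; apply/setP => e; rewrite !inE.
apply/negP => /andP[eES]; move/implyP: (sub e) => /(_ eES)/andP[se te].
by rewrite /incident; case/orP => /eqP ev; rewrite -ev ?se ?te in vV.
Qed.

Lemma connect_path_edges (X : {set E}) x y : connect (adj src tgt X) x y ->
  exists2 Q : {set E}, Q \subset X & forall v, odd_deg Q v = (x == v) (+) (y == v).
Proof.
move/connectP=> [p xp ->]; elim: p x xp => [|z p IH] x /=.
  by move=> _; exists set0 => [|v]; rewrite ?sub0set ?odd_deg0 ?addbb.
case/andP=> /existsP[f /andP[fX fxz]] /IH[Q QX oddQ].
exists (symdiff [set f] Q) => [|v].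
  apply/subsetP=> e; rewrite in_symdiff inE.
  by case: (eqVneq e f) => [->|_] //= eQ; apply: (subsetP QX).
rewrite odd_deg_symdiff odd_deg1 (joins_incident _ fxz) oddQ.
by case: (x == v); case: (z == v); case: (last z p == v).
Qed.

Lemma odd_deg_xor (F : {set E}) v :
  odd_deg F v = \big[addb/false]_(f in F) incident src tgt f v.
Proof.
rewrite /odd_deg /deg -sum1dep_card big_mkcondr.
rewrite (big_morph odd oddD (erefl : odd 0 = false)).
by apply: eq_bigr => f _; case: incident.
Qed.

Lemma big_xor_eq (K : {set V}) a : \big[addb/false]_(v in K) (a == v) = (a \in K).
Proof.
have [aK|aK] := boolP (a \in K); last first.
  by apply: big1 => v vK; apply/eqP => av; rewrite av vK in aK.
rewrite (bigD1 a) //= eqxx big1 // => v /andP[_ va].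
by rewrite eq_sym (negbTE va).
Qed.

(* Otherwise the component K of [src e] in [F :\ e] would contain exactly one
   vertex of odd degree in [F :\ e]. *)
Lemma cycle_space_edge_connect (F : {set E}) e :
  in_cycle_space src tgt F -> e \in F ->
  connect (adj src tgt (F :\ e)) (src e) (tgt e).
Proof.
move=> /cycle_spaceP evF eF; apply/negPn/negP => disc.
set F' := F :\ e; set K := [set v | connect (adj src tgt F') (src e) v].
have tgtK : tgt e \notin K by rewrite inE.
have srcK : src e \in K by rewrite inE connect0.
have F'E : F' = symdiff F [set e].
  apply/setP=> x; rewrite in_symdiff !inE.
  by case: (eqVneq x e) => [->|] /=; rewrite ?eF ?addbF.
have K_closed f : f \in F' -> (src f \in K) = (tgt f \in K).
  move=> fF'; rewrite !inE; apply/idP/idP => /connect_trans; apply; apply: connect1;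
    by apply/existsP; exists f; rewrite fF' /joins !eqxx ?orbT.
have : \big[addb/false]_(v in K) odd_deg F' v = true.
  rewrite -srcK -big_xor_eq; apply: eq_bigr => v vK.
  rewrite F'E odd_deg_symdiff (negbTE (evF v)) odd_deg1 incidentE.
  by rewrite (_ : (tgt e == v) = false) ?addbF //; apply: contraNF tgtK => /eqP->.
under eq_bigr do rewrite odd_deg_xor.
rewrite exchange_big /= big1 // => f fF'.
under eq_bigr do rewrite incidentE.
by rewrite big_split /= !big_xor_eq K_closed // addbb.
Qed.

End EdgeSets.

Lemma lt_measure_ind (T : finType) (d : Order.disp_t) (R : porderType d)
    (f : T -> R) (P : T -> Prop) :
  (forall x, (forall y, (f y < f x)%O -> P y) -> P x) -> forall x, P x.
Proof.
move=> IH x; suff: forall N x, #|[set y | (f y < f x)%O]| <= N -> P x by apply.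
elim=> [|N IHN] {}x below; apply: IH => y fyx.
  by move: below; rewrite leqn0 cards_eq0 => /eqP/setP/(_ y); rewrite !inE fyx.
apply: IHN; rewrite -ltnS (leq_trans _ below) // proper_card // properEneq.
apply/andP; split.
  by apply/eqP=> /setP/(_ y); rewrite !inE fyx ltxx.
by apply/subsetP=> z; rewrite !inE => /lt_trans; apply.
Qed.

Section Lengths.
Variables (V E : finType) (src tgt : E -> V) (R : realFieldType) (len : E -> R).
Hypothesis len_pos : forall e, (0 < len e)%R.
Local Open Scope ring_scope.
Local Notation glen := (glen len).

Lemma glen_ge0 (A : {set E}) : 0 <= glen A.
Proof. by apply: sumr_ge0 => e _; apply: ltW. Qed.

Lemma glen_setD (A B : {set E}) : A \subset B -> glen B = glen A + glen (B :\: A).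
Proof. by move=> sAB; rewrite /glen (big_setID A) /= (setIidPr sAB). Qed.

Lemma glen_subset (A B : {set E}) : A \subset B -> glen A <= glen B.
Proof. by move=> sAB; rewrite (glen_setD sAB) lerDl glen_ge0. Qed.

Lemma glen_gt0 (A : {set E}) : A != set0 -> 0 < glen A.
Proof.
case/set0Pn=> e eA; rewrite (glen_setD (_ : [set e] \subset A)) ?sub1set //.
by rewrite /glen big_set1 ltr_wpDr // glen_ge0.
Qed.

Lemma glen_symdiff (A B : {set E}) : glen (symdiff A B) <= glen A + glen B.
Proof.
apply: (@le_trans _ _ (glen (A :|: B))).
  by apply: glen_subset; apply/subsetP=> x; rewrite in_symdiff !inE; case: (x \in A).
rewrite (glen_setD (subsetUl A B)) lerD2l; apply: glen_subset.
by apply/subsetP=> x; rewrite !inE; case: (x \in A); case: (x \in B).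
Qed.

Definition shorter_cycle_space_seq (F : {set E}) (Ds : seq {set E}) :=
  {in Ds, forall D, in_cycle_space src tgt D /\ glen D < glen F}.

Section FoldMin.
Variables (T : eqType) (f : T -> R).

Lemma foldr_omin_le (s : seq T) x : x \in s ->
  exists y, foldr (@omin R) None [seq Some (f z) | z <- s] = Some y /\ y <= f x.
Proof.
elim: s => [|a s IH] //; rewrite inE /= => /orP[/eqP->|/IH[y [-> yx]]].
  by case: foldr => [b|]; [exists (Order.min (f a) b); rewrite ge_min lexx | exists (f a)].
by exists (Order.min (f a) y); rewrite ge_min yx orbT.
Qed.

Lemma foldr_omin_some (s : seq T) y :
  foldr (@omin R) None [seq Some (f z) | z <- s] = Some y ->
  exists2 x, x \in s & y = f x.
Proof.
elim: s y => [|a s IH] y //=; case: foldr (IH) => [b|] IHb /=; last first.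
  by case=> <-; exists a; rewrite ?mem_head.
case=> <-; rewrite minEle; case: ifP => _; first by exists a; rewrite ?mem_head.
by have [x xs ->] := IHb b erefl; exists x; rewrite // inE xs orbT.
Qed.

End FoldMin.

Definition steiner_subgraphs (VS : {set V}) (ES : {set E}) (A : {set V}) :=
  [set X : {set V} * {set E} | [&& X.1 \subset VS, X.2 \subset ES,
     is_subgraph src tgt X.1 X.2, connected_sub src tgt X.1 X.2 & A \subset X.1]].

Lemma sd_le VS ES A X : X \in steiner_subgraphs VS ES A ->
  exists y, sd src tgt len VS ES A = Some y /\ y <= glen X.2.
Proof. by move=> XA; apply: foldr_omin_le; rewrite mem_enum. Qed.

Lemma sd_attained VS ES A y : sd src tgt len VS ES A = Some y ->
  exists2 X, X \in steiner_subgraphs VS ES A & y = glen X.2.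
Proof. by move/foldr_omin_some=> [X]; rewrite mem_enum; exists X. Qed.

Lemma not_fully_geodesic_shortcut VS ES :
  is_subgraph src tgt VS ES -> connected_sub src tgt VS ES ->
  ~ fully_geodesic src tgt len VS ES ->
  exists (A : {set V}) (S : {set V} * {set E}),
    [/\ A \subset VS, S \in steiner_subgraphs [set: V] [set: E] A &
        forall X, X \in steiner_subgraphs VS ES A -> glen S.2 < glen X.2].
Proof.
move=> subH connH not_geo.
have [k not_k_geo] := not_all_ex_not _ _ not_geo.
have [A not_A_geo] := not_all_ex_not _ _ not_k_geo.
have [AV not_sd_eq] := imply_to_and _ _ not_A_geo.
have [_ sd_neq] := imply_to_and _ _ not_sd_eq.
have [c [sdH _]] : exists c, sd src tgt len VS ES A = Some c /\ c <= glen ES.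
  by apply: (@sd_le _ _ _ (VS, ES)); rewrite inE /= !subxx subH connH AV.
have [Y YA cY] := sd_attained sdH.
have [|g [sdG gY]] := @sd_le [set: V] [set: E] A Y.
  by move: YA; rewrite !inE => /and5P[_ _ -> -> ->]; rewrite !subsetT.
have [S SA gS] := sd_attained sdG; exists A, S; split=> // X XA.
have [c' [sdX c'X]] := sd_le XA; move: sdX; rewrite sdH => -[cc'].
apply: lt_le_trans c'X; rewrite -cc'.
rewrite -gS cY lt_neqAle gY andbT; apply/eqP => gc; apply: sd_neq.
by rewrite sdH sdG gc cY.
Qed.

End Lengths.

Lemma neq_mod_window n i j : 0 < n -> i < j < i + n -> (j == i %[mod n]) = false.
Proof.
move=> n_gt0 /andP[ij jin]; rewrite eqn_mod_dvd; last exact: ltnW.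
by apply/negP => /dvdn_leq; rewrite subn_gt0 => /(_ ij); lia.
Qed.

Lemma exists_mod_window n b j : 0 < n -> exists2 i, b <= i < b + n & i = j %[mod n].
Proof.
move=> n_gt0; have bE := divn_eq b n; have := ltn_pmod b n_gt0.
have := ltn_pmod j n_gt0; set q := b %/ n; set r := b %% n; set s := j %% n.
move=> s_lt r_lt; have [rs|sr] := leqP r s.
  by exists (q * n + s); rewrite ?modnMDl ?modn_mod //; apply/andP; split; lia.
by exists (q.+1 * n + s); rewrite ?modnMDl ?modn_mod // mulSn; apply/andP; split; lia.
Qed.

Section CyclicEnumeration.
Variables (V E : finType) (src tgt : E -> V).
Hypothesis noloop : forall e, src e != tgt e.

(* A cycle of length n listed cyclically: the i-th vertex is [vf i] and the
   i-th edge [gf i] joins [vf i] to [vf i.+1], indices being read modulo n. *)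
Definition cyclic_enum n (vf : nat -> V) (gf : nat -> E) :=
  [/\ 1 < n, forall i j, (vf i == vf j) = (i == j %[mod n]),
      forall i j, (gf i == gf j) = (i == j %[mod n])
    & forall i, joins src tgt (gf i) (vf i) (vf i.+1)].

Variables (n : nat) (vf : nat -> V) (gf : nat -> E).
Hypothesis enum_vf_gf : cyclic_enum n vf gf.

Definition cyc_vertices := [set vf i | i : 'I_n].
Definition cyc_edges := [set gf i | i : 'I_n].
Definition arc p m := [set e | [exists i : 'I_m, (p <= i) && (gf i == e)]].

Let n_gt1 : 1 < n. Proof. by case: enum_vf_gf. Qed.
Let n_gt0 : 0 < n. Proof. exact: ltnW n_gt1. Qed.
Let eq_vf i j : (vf i == vf j) = (i == j %[mod n]). Proof. by case: enum_vf_gf. Qed.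
Let eq_gf i j : (gf i == gf j) = (i == j %[mod n]). Proof. by case: enum_vf_gf. Qed.
Let gf_joins i : joins src tgt (gf i) (vf i) (vf i.+1). Proof. by case: enum_vf_gf. Qed.

Lemma vf_mod i j : i = j %[mod n] -> vf i = vf j.
Proof. by move=> ij; apply/eqP; rewrite eq_vf ij. Qed.

Lemma gf_mod i j : i = j %[mod n] -> gf i = gf j.
Proof. by move=> ij; apply/eqP; rewrite eq_gf ij. Qed.

Lemma vf_addn i : vf (i + n) = vf i.
Proof. by apply: vf_mod; rewrite modnDr. Qed.

Lemma cyc_verticesP x : reflect (exists i, x = vf i) (x \in cyc_vertices).
Proof.
apply: (iffP imsetP) => [[i _ ->]|[i ->]]; first by exists i.
by exists (Ordinal (ltn_pmod i n_gt0)) => //=; apply: vf_mod; rewrite modn_mod.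
Qed.

Lemma cyc_edgesP e : reflect (exists i, e = gf i) (e \in cyc_edges).
Proof.
apply: (iffP imsetP) => [[i _ ->]|[i ->]]; first by exists i.
by exists (Ordinal (ltn_pmod i n_gt0)) => //=; apply: gf_mod; rewrite modn_mod.
Qed.

Lemma vf_cyc i : vf i \in cyc_vertices. Proof. by apply/cyc_verticesP; exists i. Qed.
Lemma gf_cyc i : gf i \in cyc_edges. Proof. by apply/cyc_edgesP; exists i. Qed.

Lemma incident_gf i v : incident src tgt (gf i) v = (vf i == v) (+) (vf i.+1 == v).
Proof. exact: joins_incident. Qed.

Lemma arcP p m e : reflect (exists2 i, p <= i < m & e = gf i) (e \in arc p m).
Proof.
rewrite inE; apply: (iffP existsP) => [[i /andP[pi /eqP<-]]|[i /andP[pi im] ->]].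
  by exists i; rewrite ?pi ?ltn_ord.
by exists (Ordinal im); rewrite /= pi eqxx.
Qed.

Lemma arc_sub p m : arc p m \subset cyc_edges.
Proof. by apply/subsetP => e /arcP[i _ ->]; apply: gf_cyc. Qed.

Lemma arc_nil p : arc p p = set0.
Proof. by apply/setP => e; rewrite [RHS]inE; apply/negP => /arcP[i /andP[]]; lia. Qed.

Lemma arc_full b : arc b (b + n) = cyc_edges.
Proof.
apply/eqP; rewrite eqEsubset arc_sub; apply/subsetP => e /cyc_edgesP[j ->].
by have [i ib ij] := exists_mod_window b j n_gt0; apply/arcP; exists i => //; apply: gf_mod.
Qed.

Lemma arc_split p q m : p <= q <= m -> m <= p + n ->
  arc p m = symdiff (arc p q) (arc q m).
Proof.
move=> /andP[pq qm] mpn; rewrite symdiff_disjoint; last first.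
  rewrite -setI_eq0; apply/eqP/setP => e; rewrite in_setI in_set0.
  apply/andP => -[/arcP[i /andP[pi iq] ->] /arcP[j /andP[qj jm] /eqP]].
  by rewrite eq_gf eq_sym neq_mod_window //; apply/andP; split; lia.
apply/setP => e; rewrite in_setU; apply/arcP/orP => [[i /andP[pi im] ->]|].
  by case: (ltnP i q) => iq; [left | right]; apply/arcP; exists i => //; apply/andP.
by case=> /arcP[i /andP[? ?] ->]; exists i => //; apply/andP; split; lia.
Qed.

Lemma odd_deg_arc p k v : k <= n ->
  odd_deg src tgt (arc p (p + k)) v = (vf p == v) (+) (vf (p + k) == v).
Proof.
elim: k => [|k IH] kn; first by rewrite addn0 arc_nil odd_deg0 addbb.
rewrite addnS (arc_split (q := p + k)); last by lia.
  rewrite odd_deg_symdiff IH ?(ltnW kn) //.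
  rewrite (_ : arc _ _ = [set gf (p + k)]) ?odd_deg1 ?incident_gf.
    by case: (vf p == v); case: (vf (p + k) == v); case: (vf (p + k).+1 == v).
  apply/setP => e; rewrite inE; apply/arcP/eqP => [[i ik ->]|->]; last by exists (p + k) => //; lia.
  by congr gf; lia.
by apply/andP; split; lia.
Qed.

Lemma cycle_space_cyc_edges : in_cycle_space src tgt cyc_edges.
Proof.
apply/cycle_spaceP => v.
by rewrite -(arc_full 0) (odd_deg_arc 0 v (leqnn n)) vf_addn addbb.
Qed.

Lemma connect_walk (X : {set E}) i k :
  (forall t, i <= t < i + k -> gf t \in X) ->
  connect (adj src tgt X) (vf i) (vf (i + k)).
Proof.
elim: k => [|k IH] walkX; first by rewrite addn0 connect0.
apply: (connect_trans (IH _)); first by move=> t ?; apply: walkX; lia.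
rewrite addnS; apply: connect1; rewrite adj_joins; apply/existsP; exists (gf (i + k)).
by rewrite gf_joins andbT; apply: walkX; lia.
Qed.

Lemma deg_cyc_vertex i : deg src tgt cyc_edges (vf i) = 2.
Proof.
have prev_i : (i + n).-1.+1 = i + n by lia.
rewrite /deg; have -> : [set e in cyc_edges | incident src tgt e (vf i)] =
    [set gf i; gf (i + n).-1].
  apply/setP => e; rewrite !inE; apply/andP/orP => [[/cyc_edgesP[j ->]]|].
    rewrite incident_gf !eq_vf !eq_gf; case: (j == i %[mod n]) => /=; [by left | right].
    by rewrite -(eqn_modDr 1) !addn1 prev_i modnDr.
  case=> /eqP->; rewrite gf_cyc incident_gf ?prev_i !eq_vf ?modnDr eqxx;
    by split=> //; rewrite neq_mod_window //; apply/andP; split; lia.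
by rewrite cards2 eq_gf eq_sym neq_mod_window //; apply/andP; split; lia.
Qed.

Lemma cyc_is_cycle : is_cycle src tgt cyc_vertices cyc_edges.
Proof.
have from0 i : connect (adj src tgt cyc_edges) (vf 0) (vf i).
  by rewrite -[i]add0n; apply: connect_walk => t _; apply: gf_cyc.
apply/and3P; split.
- apply/forallP => e; apply/implyP => /cyc_edgesP[i ->].
  by case/orP: (gf_joins i) => /andP[/eqP-> /eqP->]; rewrite !vf_cyc.
- apply/andP; split; first by apply/set0Pn; exists (vf 0); apply: vf_cyc.
  apply/forallP => u; apply/implyP => /cyc_verticesP[i ->].
  apply/forallP => v; apply/implyP => /cyc_verticesP[j ->].
  by apply: (connect_trans _ (from0 j)); rewrite (sym_connect_sym (@adj_sym _ _ _ _ _)) from0.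
- by apply/forallP => v; apply/implyP => /cyc_verticesP[i ->]; rewrite deg_cyc_vertex.
Qed.

Section CoArc.
Variables (p m : nat).
Hypotheses (p_lt_m : p < m) (m_le_pn : m <= p + n).

(* The part of the cycle left after deleting the edges and the interior
   vertices of the arc from [vf p] to [vf m]. *)
Definition co_arc_vertices :=
  [set x in cyc_vertices | ~~ [exists t : 'I_m, (p < t) && (vf t == x)]].
Definition co_arc_edges := cyc_edges :\: arc p m.

Lemma co_arc_verticesPn j :
  reflect (exists2 t, p < t < m & vf t = vf j) (vf j \notin co_arc_vertices).
Proof.
rewrite inE vf_cyc /= negbK; apply: (iffP existsP) => [[t /andP[pt /eqP tj]]|[t /andP[pt tm] tj]].
  by exists t; rewrite ?pt ?ltn_ord.
by exists (Ordinal tm); rewrite /= pt tj eqxx.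
Qed.

Lemma co_arc_edges_ends j : gf j \in co_arc_edges ->
  (vf j \in co_arc_vertices) && (vf j.+1 \in co_arc_vertices).
Proof.
rewrite inE gf_cyc andbT => jarc; apply/andP; split; apply/negPn/co_arc_verticesPn.
  move=> [t /andP[pt tm] /eqP]; rewrite eq_vf => /eqP tj; move: jarc => /negP; apply.
  by apply/arcP; exists t; [apply/andP; split; lia | apply: gf_mod].
move=> [t /andP[pt tm] /eqP]; rewrite eq_vf => tj; move: jarc => /negP; apply.
apply/arcP; exists t.-1; first by apply/andP; split; lia.
apply: gf_mod; apply/eqP; rewrite -(eqn_modDr 1) !addn1 prednK //; lia.
Qed.

Lemma co_arc_subgraph : is_subgraph src tgt co_arc_vertices co_arc_edges.
Proof.
apply/forallP => e; apply/implyP => eX; have := eX; rewrite inE => /andP[_ /cyc_edgesP[j ej]].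
move: eX; rewrite ej => /co_arc_edges_ends/andP[Xj Xj1].
by case/orP: (gf_joins j) => /andP[/eqP-> /eqP->]; rewrite Xj Xj1.
Qed.

Lemma vf_start_co_arc : vf p \in co_arc_vertices.
Proof.
apply/negPn/co_arc_verticesPn => -[t /andP[pt tm] /eqP]; rewrite eq_vf neq_mod_window //.
by apply/andP; split; lia.
Qed.

Lemma co_arc_connect_end x : x \in co_arc_vertices ->
  connect (adj src tgt co_arc_edges) x (vf (p + n)).
Proof.
move=> Xx; have := Xx; rewrite inE => /andP[/cyc_verticesP[j xj] _]; subst x.
have [i /andP[pi ipn] /vf_mod ij] := exists_mod_window p j n_gt0; rewrite -ij in Xx *.
have [ip|pi'] := leqP i p.
  by rewrite (_ : i = p) ?vf_addn ?connect0 //; lia.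
have [im|mi] := ltnP i m.
  by move/co_arc_verticesPn: Xx; case; exists i => //; apply/andP.
rewrite (_ : p + n = i + (p + n - i)); last by lia.
apply: connect_walk => t /andP[it tpn]; rewrite inE gf_cyc andbT.
apply/negP => /arcP[s /andP[ps sm] /eqP]; rewrite eq_gf neq_mod_window //.
by apply/andP; split; lia.
Qed.

Lemma co_arc_connected : connected_sub src tgt co_arc_vertices co_arc_edges.
Proof.
apply/andP; split; first by apply/set0Pn; exists (vf p); apply: vf_start_co_arc.
apply/forallP => u; apply/implyP => Xu; apply/forallP => v; apply/implyP => Xv.
apply: (connect_trans (co_arc_connect_end Xu)).
by rewrite (sym_connect_sym (@adj_sym _ _ _ _ _)) co_arc_connect_end.
Qed.

End CoArc.

Section Shortcut.
Variables (R : realFieldType) (len : E -> R).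
Hypothesis len_pos : forall e, (0 < len e)%R.
Variables (A : {set V}) (S : {set V} * {set E}).
Hypotheses (A_cyc : A \subset cyc_vertices)
  (S_steiner : S \in steiner_subgraphs src tgt [set: V] [set: E] A)
  (S_short : forall X, X \in steiner_subgraphs src tgt cyc_vertices cyc_edges A ->
     (glen len S.2 < glen len X.2)%R).

Let A_S : A \subset S.1.
Proof. by move: S_steiner; rewrite inE => /and5P[]. Qed.

Lemma arc_shortcut p m : p < m -> m <= p + n ->
  (forall t, p < t < m -> vf t \notin A) ->
  (glen len (arc p m) + glen len S.2 < glen len cyc_edges)%R.
Proof.
move=> pm mpn interior.
have A_co : A \subset co_arc_vertices p m.
  apply/subsetP => a Aa; have /cyc_verticesP[j aj] := subsetP A_cyc a Aa; subst a.
  apply/negPn/negP => /co_arc_verticesPn[t tpm tj].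
  by move: (interior t tpm); rewrite tj Aa.
have co_sub : co_arc_vertices p m \subset cyc_vertices.
  by apply/subsetP => x; rewrite inE => /andP[].
rewrite (glen_setD _ (arc_sub p m)) ltrD2l.
apply: (S_short (X := (co_arc_vertices p m, co_arc_edges p m))).
by rewrite inE /= co_sub subsetDl co_arc_subgraph ?co_arc_connected.
Qed.

Variables (b : nat) (Rp : V -> {set E}).
Hypotheses (b_A : vf b \in A)
  (Rp_path : forall x, x \in S.1 -> Rp x \subset S.2 /\
     forall v, odd_deg src tgt (Rp x) v = (vf b == v) (+) (x == v)).

(* The closed walk formed by the arc from [vf p] to [vf m] and the two paths
   in S joining its ends to the root [vf b]. *)
Definition detour p m := symdiff (symdiff (arc p m) (Rp (vf p))) (Rp (vf m)).

Lemma cycle_space_detour p m : p <= m <= p + n ->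
  vf p \in A -> vf m \in A -> in_cycle_space src tgt (detour p m).
Proof.
move=> /andP[pm mpn] Ap Am; apply/cycle_spaceP => v.
rewrite !odd_deg_symdiff.
have [_ ->] := Rp_path (subsetP A_S _ Ap); have [_ ->] := Rp_path (subsetP A_S _ Am).
rewrite -(subnKC pm) odd_deg_arc; last by lia.
by case: (vf p == v); case: (vf b == v); case: (vf _ == v).
Qed.

Lemma detour_short p m : p < m -> m <= p + n ->
  vf p \in A -> vf m \in A -> (forall t, p < t < m -> vf t \notin A) ->
  (glen len (detour p m) < glen len cyc_edges)%R.
Proof.
move=> pm mpn Ap Am interior; rewrite /detour -symdiffA.
apply: le_lt_trans (glen_symdiff len_pos _ _) (le_lt_trans _ (arc_shortcut pm mpn interior)).
rewrite lerD2l; apply: glen_subset => //; apply/subsetP => e; rewrite in_symdiff.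
have [RpS _] := Rp_path (subsetP A_S _ Ap); have [RmS _] := Rp_path (subsetP A_S _ Am).
by case: (boolP (e \in Rp (vf p))) => [ep _|_ /= em]; [apply: (subsetP RpS) | apply: (subsetP RmS)].
Qed.

Lemma detour_split p q m : p <= q <= m -> m <= p + n ->
  detour p m = symdiff (detour p q) (detour q m).
Proof.
move=> pqm mpn; rewrite /detour (arc_split pqm mpn); apply/setP => e.
by rewrite !in_symdiff; do ![case: (e \in _)].
Qed.

Lemma detour_full : detour b (b + n) = cyc_edges.
Proof. by rewrite /detour arc_full vf_addn -symdiffA symdiffv symdiffs0. Qed.

Lemma detour_prefix_decomp k : k <= n ->
  exists p, [/\ b <= p <= b + k, vf p \in A,
    (forall t, p < t <= b + k -> vf t \notin A) &
    exists2 Ds, shorter_cycle_space_seq src tgt len cyc_edges Ds & F2sum Ds = detour b p].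
Proof.
elim: k => [|k IH] kn.
  exists b; split; rewrite ?addn0 ?leqnn //; first by move=> t /andP[]; lia.
  by exists [::] => //=; rewrite /detour arc_nil -symdiffA symdiffv symdiffs0.
have [p [/andP[bp pbk] Ap pA [Ds Ds_short Ds_sum]]] := IH (ltnW kn).
have [Ak|nAk] := boolP (vf (b + k.+1) \in A); last first.
  exists p; split=> //; first by apply/andP; split; lia.
    move=> t /andP[pt tbk]; have [->|tk] := eqVneq t (b + k.+1) => //.
    by apply: pA; apply/andP; split; lia.
  by exists Ds.
exists (b + k.+1); split=> //; first by rewrite leqnn; apply/andP; split; lia.
  by move=> t /andP[]; lia.
exists (detour p (b + k.+1) :: Ds).
  move=> D; rewrite inE => /predU1P[->|]; last exact: Ds_short.
  split; first by apply: cycle_space_detour => //; apply/andP; split; lia.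
  apply: detour_short => //; try lia.
  by move=> t /andP[pt tbk]; apply: pA; apply/andP; split; lia.
rewrite /= Ds_sum symdiffC -(detour_split (q := p)) //; [apply/andP; split | ]; lia.
Qed.

Lemma cyc_edges_detour_decomp :
  exists2 Ds, shorter_cycle_space_seq src tgt len cyc_edges Ds & cyc_edges = F2sum Ds.
Proof.
have [p [/andP[bp pbn] _ pA [Ds Ds_short Ds_sum]]] := detour_prefix_decomp (leqnn n).
have p_end : p = b + n.
  apply/eqP; rewrite eqn_leq pbn leqNgt; apply/negP => pbn'.
  by move: (pA (b + n)); rewrite pbn' leqnn vf_addn b_A => /(_ isT).
by exists Ds; rewrite // Ds_sum p_end detour_full.
Qed.

End Shortcut.

End CyclicEnumeration.

Section ClosePath.
Variables (V E : finType) (src tgt : E -> V).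
Hypothesis noloop : forall e, src e != tgt e.
Variables (F : {set E}) (e : E) (p : seq V).
Hypotheses (eF : e \in F) (p_path : path (adj src tgt (F :\ e)) (src e) p)
  (p_uniq : uniq (src e :: p)) (p_last : last (src e) p = tgt e).

Let k := size p.
Let n := k.+1.
Let s := src e :: p.

Definition pick_edge x y := odflt e [pick f in F :\ e | joins src tgt f x y].

Lemma pick_edgeP x y : adj src tgt (F :\ e) x y ->
  pick_edge x y \in F :\ e /\ joins src tgt (pick_edge x y) x y.
Proof.
rewrite adj_joins /pick_edge; case: pickP => [f /andP[fF fxy] _ //|none].
by case/existsP => f /andP[fF fxy]; move: (none f); rewrite fF fxy.
Qed.

(* Close the path [s] by the edge [e] from its last vertex back to [src e]. *)
Definition path_vf i := nth (src e) s (i %% n).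
Definition path_gf i :=
  if i %% n < k then pick_edge (nth (src e) s (i %% n)) (nth (src e) s (i %% n).+1) else e.

Let k_gt0 : 0 < k.
Proof.
by rewrite /k lt0n size_eq0; apply: contraNneq (noloop e) => p0; rewrite -p_last p0.
Qed.

Let step_adj j : j < k -> adj src tgt (F :\ e) (nth (src e) s j) (nth (src e) s j.+1).
Proof. by move=> jk; move/(pathP (src e)): p_path; apply. Qed.

Let mod_last i : i %% n < k = false -> i %% n = k.
Proof. by have := ltn_pmod i (ltn0Sn k); rewrite ltnS leq_eqVlt => /orP[/eqP->|->]. Qed.

Let nth_inj a b : a < n -> b < n -> nth (src e) s a = nth (src e) s b -> a = b.
Proof. by move=> an bn /eqP; rewrite nth_uniq // => /eqP. Qed.

Lemma path_cyclic_enum : cyclic_enum src tgt n path_vf path_gf.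
Proof.
have mod_lt i : i %% n < n by apply: ltn_pmod.
split=> [|i j|i j|i]; first by rewrite ltnS k_gt0.
- by rewrite /path_vf nth_uniq // /s /= ltn_pmod.
- apply/eqP/eqP => [|ij]; last by rewrite /path_gf ij.
  rewrite /path_gf; case: ifP => ik; case: ifP => jk.
  + move=> eq_ij; have [_] := pick_edgeP (step_adj ik); have [_] := pick_edgeP (step_adj jk).
    rewrite eq_ij => /joins_ends/[apply] -[[/nth_inj ij _]|[/nth_inj ij /nth_inj ji]].
      by rewrite ij.
    by have := ji ltac:(lia) ltac:(lia); have := ij ltac:(lia) ltac:(lia); lia.
  + by move=> ije; have [] := pick_edgeP (step_adj ik); rewrite ije !inE eqxx.
  + by move=> ije; have [] := pick_edgeP (step_adj jk); rewrite -ije !inE eqxx.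
  + by move=> _; rewrite (mod_last ik) (mod_last jk).
- have modS : i.+1 %% n = if i %% n < k then (i %% n).+1 else 0.
    rewrite -addn1 -modnDml addn1; case: ifP => ik; first by rewrite modn_small.
    by rewrite (mod_last ik) modnn.
  rewrite /path_gf /path_vf modS; case: ifP => ik; first by case: (pick_edgeP (step_adj ik)).
  have s_last : nth (src e) s k = tgt e by rewrite -p_last (nth_last (src e) s).
  by rewrite (mod_last ik) s_last /joins !eqxx orbT.
Qed.

Lemma path_cyc_edges_sub : cyc_edges n path_gf \subset F.
Proof.
apply/subsetP => f /imsetP[i _ ->]; rewrite /path_gf; case: ifP => // ik.
by case: (pick_edgeP (step_adj ik)) => /setD1P[].
Qed.

End ClosePath.

Lemma cycle_space_cyclic_enum (V E : finType) (src tgt : E -> V)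
    (noloop : forall e, src e != tgt e) (F : {set E}) :
  in_cycle_space src tgt F -> F != set0 ->
  exists n vf gf, cyclic_enum src tgt n vf gf /\ cyc_edges n gf \subset F.
Proof.
move=> evF /set0Pn[e eF].
have /connectP[p0 p0_path] := cycle_space_edge_connect noloop evF eF.
case: (shortenP p0_path) => p p_path p_uniq _ p_last.
exists (size p).+1, (path_vf src e p), (path_gf src tgt F e p); split.
  exact: path_cyclic_enum.
exact: path_cyc_edges_sub.
Qed.

Section GeodesicCycleSpan.
Variables (V E : finType) (src tgt : E -> V).
Hypothesis noloop : forall e, src e != tgt e.
Variables (R : realFieldType) (len : E -> R).
Hypothesis len_pos : forall e, (0 < len e)%R.

Definition geodesic_cycle_span (F : {set E}) :=
  exists cs : seq ({set V} * {set E}),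
    (forall C, C \in cs ->
       is_cycle src tgt C.1 C.2 /\ fully_geodesic src tgt len C.1 C.2) /\
    F = F2sum [seq C.2 | C <- cs].

Lemma geodesic_cycle_span_F2sum (Ds : seq {set E}) :
  {in Ds, forall D, geodesic_cycle_span D} -> geodesic_cycle_span (F2sum Ds).
Proof.
elim: Ds => [|D Ds IH] spanDs; first by exists [::].
have [cs1 [cs1_geo ->]] := spanDs D (mem_head _ _).
have [|cs2 [cs2_geo Ds_sum]] := IH; first by move=> D' D'Ds; apply: spanDs; rewrite inE D'Ds orbT.
exists (cs1 ++ cs2); split; last by rewrite map_cat F2sum_cat /= Ds_sum.
by move=> C; rewrite mem_cat => /orP[]; [apply: cs1_geo | apply: cs2_geo].
Qed.

Lemma not_fully_geodesic_cyc_decomp n vf gf : cyclic_enum src tgt n vf gf ->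
  ~ fully_geodesic src tgt len (cyc_vertices n vf) (cyc_edges n gf) ->
  exists2 Ds, shorter_cycle_space_seq src tgt len (cyc_edges n gf) Ds &
    cyc_edges n gf = F2sum Ds.
Proof.
move=> enum not_geo; have /and3P[sub conn _] := cyc_is_cycle noloop enum.
have [A [S [A_cyc S_steiner S_short]]] := not_fully_geodesic_shortcut sub conn not_geo.
have [b b_A] : exists b, vf b \in A.
  (* Otherwise a single vertex of C would be a connected subgraph shorter than S. *)
  have [A0|[a Aa]] := set_0Vmem A; last first.
    by have /(cyc_verticesP enum)[b ab] := subsetP A_cyc a Aa; exists b; rewrite -ab.
  have := S_short ([set vf 0], set0).
  rewrite inE /= sub1set (vf_cyc enum) A0 !sub0set subgraph_vertex connected_vertex.
  by rewrite /glen big_set0 ltNge glen_ge0 => // /(_ isT).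
have := S_steiner; rewrite inE => /and5P[_ _ _ S_conn A_S].
have [Rp Rp_path] : exists Rp : V -> {set E}, forall x, x \in S.1 ->
    Rp x \subset S.2 /\ forall v, odd_deg src tgt (Rp x) v = (vf b == v) (+) (x == v).
  apply: (@fin_all_exists _ (fun _ => {set E}) (fun x Q => x \in S.1 ->
    Q \subset S.2 /\ forall v, odd_deg src tgt Q v = (vf b == v) (+) (x == v))) => x.
  have [xS|] := boolP (x \in S.1); last by exists set0.
  have bx := connected_sub_connect S_conn (subsetP A_S _ b_A) xS.
  by have [Q QS oddQ] := connect_path_edges noloop bx; exists Q.
exact (cyc_edges_detour_decomp noloop enum len_pos A_cyc S_steiner S_short b_A Rp_path).
Qed.

Lemma geodesic_cycle_span_step (F : {set E}) :
  (forall D, in_cycle_space src tgt D -> (glen len D < glen len F)%R ->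
     geodesic_cycle_span D) ->
  in_cycle_space src tgt F -> geodesic_cycle_span F.
Proof.
move=> IH evF.
have by_shorter Ds : shorter_cycle_space_seq src tgt len F Ds -> F = F2sum Ds ->
    geodesic_cycle_span F.
  by move=> Ds_short ->; apply: geodesic_cycle_span_F2sum => D /Ds_short[]; apply: IH.
have [->|F0] := eqVneq F set0; first by exists [::].
have [n [vf [gf [enum CF]]]] := cycle_space_cyclic_enum noloop evF F0.
have [CFeq|CFneq] := eqVneq (cyc_edges n gf) F.
  rewrite -CFeq in by_shorter *.
  have [geo|not_geo] := classic (fully_geodesic src tgt len (cyc_vertices n vf) (cyc_edges n gf)).
    exists [:: (cyc_vertices n vf, cyc_edges n gf)]; rewrite /= symdiffs0.
    by split=> // C; rewrite inE => /eqP->; split=> //; apply: cyc_is_cycle.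
  have [Ds Ds_short Ds_sum] := not_fully_geodesic_cyc_decomp enum not_geo.
  exact: by_shorter Ds_short Ds_sum.
have C0 : cyc_edges n gf != set0 by apply/set0Pn; exists (gf 0); apply: (gf_cyc enum).
have FC0 : F :\: cyc_edges n gf != set0.
  by rewrite setD_eq0; apply: contra CFneq => FC; rewrite eqEsubset CF.
have evC := cycle_space_cyc_edges noloop enum.
apply: (by_shorter [:: cyc_edges n gf; symdiff F (cyc_edges n gf)]); last first.
  by rewrite /= symdiffs0 symdiffA symdiffC symdiffA symdiffv symdiffC symdiffs0.
move=> D; rewrite !inE => /orP[]/eqP->; rewrite ?symdiff_sub //.
  by split=> //; rewrite (glen_setD _ CF) ltrDl glen_gt0.
split; first by rewrite -symdiff_sub //; apply: cycle_space_symdiff.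
by rewrite (glen_setD _ CF) ltrDr glen_gt0.
Qed.

End GeodesicCycleSpan.

Theorem proposition7p1 (V E : finType) (src tgt : E -> V)
  (noloop : forall e, src e != tgt e)
  (R : realFieldType) (len : E -> R) (len_pos : forall e, (0 < len e)%R) :
  forall F : {set E},
    in_cycle_space src tgt F <->
    exists cs : seq ({set V} * {set E}),
      (forall C, C \in cs ->
         is_cycle src tgt C.1 C.2 /\ fully_geodesic src tgt len C.1 C.2) /\
      F = F2sum [seq C.2 | C <- cs].
Proof.
move=> F; split.
  elim/(@lt_measure_ind _ _ _ (glen len)): F => F IH evF.
  by apply: (geodesic_cycle_span_step noloop len_pos) => // D evD DF; apply: IH.
case=> cs [cs_geo ->]; apply: cycle_space_F2sum => _ /mapP[C /cs_geo[C_cycle _] ->].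
exact: cycle_in_cycle_space C_cycle.
Qed.
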